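(* Let $\mathcal{H}=(V,\mathcal{A})$ be a multi-head HyTN in which every node of $V$ is the tail of at least one hyperarc, and let $G_{\mathcal{H}}$ be its associated mean payoff game. If every node of $G_{\mathcal{H}}$ is a winning start position for Player 1, then $\mathcal{H}$ is consistent.
   Context: A multi-head HyTN is a pair $\mathcal{H}=(V,\mathcal{A})$, $V$ a finite node set, $\mathcal{A}$ a finite set of hyperarcs $A=(t_A,H_A,w_A)$ with tail $t_A\in V$, nonempty head set $H_A\subseteq V\setminus\{t_A\}$ and weights $w_A(v)\in\mathbb{R}$ for $v\in H_A$. A scheduling $s:V\to\mathbb{R}$ is feasible if $s(t_A)\ge\min_{v\in H_A}\{s(v)-w_A(v)\}$ for all $A\in\mathcal{A}$; $\mathcal{H}$ is consistent if a feasible scheduling exists. A mean payoff game (MPG) is a finite directed graph with real arc weights whose node set is partitioned into $V_0$ (nodes of Player 0) and $V_1$ (nodes of Player 1), where every node has at least one outgoing arc. A play from a start node $v_0$ proceeds in moves: when the pebble is at $v_{t-1}\in V_p$, Player $p$ chooses an arc $e_t$ leaving $v_{t-1}$ and the pebble moves to its head $v_t$. The play ends at the first $t$ such that $v_t=v_{t'}$ for some $t'<t$; Player 0 wins if $\frac{1}{t-t'}\sum_{i=t'+1}^{t}w(e_i)<0$, otherwise Player 1 wins. A strategy for Player $p$ maps each history ending in a node of $V_p$ to an outgoing arc of that node. A node $s$ is a winning start position for Player 1 if Player 1 has a strategy such that every play starting at $s$ in which Player 1 follows it is won by Player 1. The associated game $G_{\mathcal{H}}$ has $V_0=V$, $V_1=\mathcal{A}$,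 and arc set $\{(t_A,A,0)\mid A\in\mathcal{A}\}\cup\{(A,h,w_A(h))\mid A\in\mathcal{A},h\in H_A\}$ (an arc $(x,y,w)$ goes from $x$ to $y$ with weight $w$). *)

From HB Require Import structures.
From mathcomp Require Import all_boot all_order all_algebra.
Set Implicit Arguments. Unset Strict Implicit. Unset Printing Implicit Defensive.
Import Order.TTheory GRing.Theory Num.Theory.
Local Open Scope ring_scope.

(* Nodes N, arcs E (a finite type, so parallel arcs are allowed),      *)
(* src/dst of arcs, real weights w, owner v = false for Player 0,      *)
(* owner v = true for Player 1.                                        *)
(* A history/play from a start node s is the sequence of arcs moved.   *)
Section MPG.
Variables (R : realFieldType) (N E : finType) (src dst : E -> N) (w : E -> R)
  (owner : N -> bool).

Fixpoint is_walk (v : N) (es : seq E) : bool :=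
  match es with
  | [::] => true
  | e :: es' => (src e == v) && is_walk (dst e) es'
  end.

(* nodes v_0, ..., v_{t-1} of a sequence of t arcs starting at s *)
Definition play_nodes (s : N) (es : seq E) : seq N := belast s (map dst es).
Definition end_node (s : N) (es : seq E) : N := last s (map dst es).

(* a finished play: a walk from s which ends at the first t such that
   v_t = v_{t'} for some t' < t *)
Definition terminated_play (s : N) (es : seq E) : bool :=
  [&& is_walk s es, uniq (play_nodes s es) & end_node s es \in play_nodes s es].

Definition cycle_arcs (s : N) (es : seq E) : seq E :=
  drop (index (end_node s es) (play_nodes s es)) es.

Definition mean_weight (es : seq E) : R :=
  (\sum_(e <- es) w e) / (size es)%:R.

Definition player0_wins (s : N) (es : seq E) : Prop :=
  mean_weight (cycle_arcs s es) < 0.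

(* strategies for plays started at a fixed node s: histories are arc sequences *)
Definition strategy := seq E -> E.

Definition valid_strategy (p : bool) (s : N) (sigma : strategy) : Prop :=
  forall h : seq E, is_walk s h -> owner (end_node s h) = p ->
    src (sigma h) = end_node s h.

Fixpoint follows (p : bool) (sigma : strategy) (v : N) (hist : seq E)
  (es : seq E) : bool :=
  match es with
  | [::] => true
  | e :: es' => ((owner v == p) ==> (e == sigma hist))
                && follows p sigma (dst e) (rcons hist e) es'
  end.

Definition winning_start1 (s : N) : Prop :=
  exists sigma : strategy, valid_strategy true s sigma /\
    forall es : seq E, terminated_play s es -> follows true sigma s [::] es ->
      ~ player0_wins s es.

End MPG.

(* Multi-head HyTNs: node type V, hyperarcs indexed by the finite type *)
(* I, tail, head set and weights w_A(v) (only relevant for v in H_A).  *)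
Section HyTN.
Variables (R : realFieldType) (V I : finType) (tail : I -> V)
  (head : I -> {set V}) (wt : I -> V -> R).

Definition feasible (s : V -> R) : Prop :=
  forall A : I, exists2 v, v \in head A & s v - wt A v <= s (tail A).

Definition consistent : Prop := exists s : V -> R, feasible s.

Definition GNode := (V + I)%type.
Definition GArc := (I + {p : I * V | p.2 \in head p.1})%type.

Definition g_src (e : GArc) : GNode :=
  match e with inl A => inl (tail A) | inr p => inr (sval p).1 end.
Definition g_dst (e : GArc) : GNode :=
  match e with inl A => inr A | inr p => inl (sval p).2 end.
Definition g_w (e : GArc) : R :=
  match e with inl _ => 0 | inr p => wt (sval p).1 (sval p).2 end.
Definition g_owner (x : GNode) : bool :=
  match x with inl _ => false | inr _ => true end.

Definition GH_winning_start1 (x : GNode) : Prop :=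
  @winning_start1 R (V + I)%type (I + {p : I * V | p.2 \in head p.1})%type g_src g_dst g_w g_owner x.

End HyTN.

From HB Require Import structures.
From mathcomp Require Import all_boot all_order all_algebra.
From mathcomp Require Import lra.
Set Implicit Arguments. Unset Strict Implicit. Unset Printing Implicit Defensive.
Import Order.TTheory GRing.Theory Num.Theory.
Local Open Scope ring_scope.

(* Fix winning strategies sigma_x of Player 1 from every start node x, and let
   pi t be the least weight of a play prefix that starts at some x, follows
   sigma_x, visits no node twice and ends at t.  Extending an optimal prefix by
   one more move either gives a longer such prefix, or closes a cycle; that
   cycle is won by Player 1, so it has nonnegative weight and can be cut off.
   Either way pi (dst e) <= pi (src e) + w e, for every arc e leaving a node of
   Player 0 and for the arc chosen by Player 1 at its nodes.  In G_H these two
   inequalities say that v |-> pi v is a feasible scheduling. *)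

Section MeanPayoffGame.
Variables (R : realFieldType) (N E : finType) (src dst : E -> N) (w : E -> R)
  (owner : N -> bool).

Local Notation walk := (is_walk src dst).
Local Notation endn := (end_node dst).

Definition walk_weight (es : seq E) : R := \sum_(e <- es) w e.

Lemma walk_weight_cat s1 s2 : walk_weight (s1 ++ s2) = walk_weight s1 + walk_weight s2.
Proof. exact: big_cat. Qed.

Lemma walk_weight_rcons s e : walk_weight (rcons s e) = walk_weight s + w e.
Proof. by rewrite -cats1 walk_weight_cat /walk_weight big_seq1. Qed.

Lemma mean_weight_ge0 es : (0 <= mean_weight w es) = (0 <= walk_weight es).
Proof.
rewrite /mean_weight -/(walk_weight es); case: es => [|e es].
  by rewrite /walk_weight big_nil mul0r.
by rewrite pmulr_lge0 // invr_gt0 ltr0n.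
Qed.

Lemma is_walk_cat v s1 s2 : walk v (s1 ++ s2) = walk v s1 && walk (endn v s1) s2.
Proof. by elim: s1 v => [|e s IH] v //=; rewrite IH andbA. Qed.

Lemma is_walk_rcons v s e : walk v (rcons s e) = walk v s && (src e == endn v s).
Proof. by rewrite -cats1 is_walk_cat /= andbT. Qed.

Lemma follows_cat p sg v hist s1 s2 :
  follows dst owner p sg v hist (s1 ++ s2) =
  follows dst owner p sg v hist s1 &&
  follows dst owner p sg (endn v s1) (hist ++ s1) s2.
Proof.
elim: s1 v hist => [|e s IH] v hist /=; first by rewrite cats0.
by rewrite IH cat_rcons andbA.
Qed.

Lemma follows_rcons p sg v s e :
  follows dst owner p sg v [::] (rcons s e) =
  follows dst owner p sg v [::] s && ((owner (endn v s) == p) ==> (e == sg s)).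
Proof. by rewrite -cats1 follows_cat /= andbT. Qed.

Lemma end_node_rcons v s e : endn v (rcons s e) = dst e.
Proof. by rewrite /end_node map_rcons last_rcons. Qed.

Lemma play_nodes_rcons v s e : play_nodes dst v (rcons s e) = v :: map dst s.
Proof. by rewrite /play_nodes map_rcons belast_rcons. Qed.

Lemma end_node_take v s i :
  (i <= size s)%N -> endn v (take i s) = nth v (v :: map dst s) i.
Proof.
rewrite /end_node; elim: s v i => [|e s IH] v [|i] //= le_i.
by rewrite IH //; apply: set_nth_default; rewrite /= size_map ltnS.
Qed.

Section WinningStrategy.
Variables (s : N) (sigma : strategy E).
Hypothesis sigma_wins : forall es, terminated_play src dst s es ->
  follows dst owner true sigma s [::] es -> ~ player0_wins dst w s es.

Definition simple_history (h : seq E) : bool :=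
  [&& walk s h, uniq (s :: map dst h) & follows dst owner true sigma s [::] h].

Lemma simple_history_take h i : simple_history h -> simple_history (take i h).
Proof.
case/and3P=> walk_h uniq_h follow_h; apply/and3P; split.
- by move: walk_h; rewrite -{1}(cat_take_drop i h) is_walk_cat => /andP[].
- by rewrite map_take; exact: (take_uniq i.+1 uniq_h).
- by move: follow_h; rewrite -{1}(cat_take_drop i h) follows_cat => /andP[].
Qed.

Lemma size_simple_history h : simple_history h -> (size h < #|N|)%N.
Proof.
case/and3P=> _ uniq_h _; have := max_card (mem (s :: map dst h)).
by rewrite (card_uniqP uniq_h) /= size_map.
Qed.

Lemma simple_history_rcons h e :
  simple_history h -> src e = endn s h -> (owner (endn s h) ==> (e == sigma h)) ->
  exists2 h', simple_history h' & endn s h' = dst e /\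
    walk_weight h' <= walk_weight h + w e.
Proof.
move=> simple_h src_e follow_e; have /and3P[walk_h uniq_h follow_h] := simple_h.
have walk_he : walk s (rcons h e) by rewrite is_walk_rcons walk_h src_e eqxx.
have follow_he : follows dst owner true sigma s [::] (rcons h e).
  by rewrite follows_rcons follow_h eqb_id.
have [closes | fresh] := boolP (dst e \in s :: map dst h); last first.
  exists (rcons h e); last by rewrite end_node_rcons walk_weight_rcons.
  rewrite /simple_history walk_he follow_he map_rcons -rcons_cons rcons_uniq.
  by rewrite fresh uniq_h.
set i := index (dst e) (s :: map dst h).
have le_i : (i <= size h)%N.
  have := index_mem (dst e) (s :: map dst h).
  by rewrite closes /= size_map ltnS => ->.
have closed_play : terminated_play src dst s (rcons h e).
  by rewrite /terminated_play walk_he play_nodes_rcons end_node_rcons uniq_h closes.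
have /negP := sigma_wins closed_play follow_he.
rewrite -leNgt mean_weight_ge0 /cycle_arcs play_nodes_rcons end_node_rcons -/i.
rewrite drop_rcons // walk_weight_rcons => cycle_ge0.
exists (take i h); first exact: simple_history_take.
split; first by rewrite end_node_take // nth_index.
rewrite -{2}(cat_take_drop i h) walk_weight_cat; lra.
Qed.

End WinningStrategy.

Section Potential.
Variable sigma : N -> strategy E.
Hypothesis sigma_valid : forall x, valid_strategy src dst owner true x (sigma x).
Hypothesis sigma_wins : forall x es, terminated_play src dst x es ->
  follows dst owner true (sigma x) x [::] es -> ~ player0_wins dst w x es.

(* Start nodes with histories of length at most #|N|: a finite type that
   contains every simple history, by size_simple_history. *)
Definition rooted_history := (N * {k : 'I_#|N|.+1 & k.-tuple E})%type.

Definition history_of (c : rooted_history) : seq E := tagged c.2.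

Definition reaches (t : N) (c : rooted_history) : bool :=
  simple_history c.1 (sigma c.1) (history_of c) && (endn c.1 (history_of c) == t).

Definition empty_history (t : N) : rooted_history :=
  (t, Tagged (fun k : 'I_#|N|.+1 => k.-tuple E) ([tuple] : ord0.-tuple E)).

Definition optimal_history (t : N) : rooted_history :=
  [arg min_(c < empty_history t | reaches t c) walk_weight (history_of c)]%O.

Definition potential (t : N) : R := walk_weight (history_of (optimal_history t)).

Lemma reaches_empty_history t : reaches t (empty_history t).
Proof. by rewrite /reaches /simple_history /= eqxx. Qed.

Lemma optimal_history_reaches t : reaches t (optimal_history t).
Proof.
by rewrite /optimal_history; case: arg_minP => //; exact: reaches_empty_history.
Qed.

Lemma potential_le_weight x h :
  simple_history x (sigma x) h -> potential (endn x h) <= walk_weight h.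
Proof.
move=> simple_h; have lt_h : (size h < #|N|.+1)%N.
  exact: leqW (size_simple_history simple_h).
pose c : rooted_history :=
  (x, Tagged (fun k : 'I_#|N|.+1 => k.-tuple E) (in_tuple h : (Ordinal lt_h).-tuple E)).
rewrite /potential /optimal_history.
case: (arg_minP _ (reaches_empty_history (endn x h))) => c' _ /(_ c); apply.
by rewrite /reaches simple_h eqxx.
Qed.

Lemma potential_step t e : src e = t ->
  (owner t ==> (e == sigma (optimal_history t).1 (history_of (optimal_history t)))) ->
  potential (dst e) <= potential t + w e.
Proof.
have /andP[simple_opt /eqP end_opt] := optimal_history_reaches t.
rewrite -{1 2}end_opt => src_e follow_e.
have [h' simple_h' [<- le_h']] :=
  simple_history_rcons (@sigma_wins _) simple_opt src_e follow_e.
exact: le_trans (potential_le_weight simple_h') le_h'.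
Qed.

Lemma potential_player1_move v : owner v ->
  exists2 e, src e = v & potential (dst e) <= potential v + w e.
Proof.
move=> owner_v; have /andP[simple_opt /eqP end_opt] := optimal_history_reaches v.
set x := (optimal_history v).1 in simple_opt end_opt *.
set h := history_of _ in simple_opt end_opt *.
have src_e : src (sigma x h) = v.
  by rewrite -end_opt; apply: sigma_valid; [case/and3P: simple_opt | rewrite end_opt].
by exists (sigma x h) => //; apply: potential_step => //; rewrite eqxx implybT.
Qed.

End Potential.

Lemma player1_winning_potential :
  (forall x, winning_start1 src dst w owner x) ->
  exists pi : N -> R,
    (forall e, ~~ owner (src e) -> pi (dst e) <= pi (src e) + w e) /\
    (forall v, owner v -> exists2 e, src e = v & pi (dst e) <= pi v + w e).
Proof.
move=> win; have [sigma sigma_win] := fin_all_exists win.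
have sigma_valid x := proj1 (sigma_win x).
have sigma_wins x := proj2 (sigma_win x).
exists (potential sigma); split => [e /negbTE owner_e | v].
- by apply: (potential_step sigma_wins) => //; rewrite owner_e.
- exact: (potential_player1_move sigma_valid sigma_wins).
Qed.

End MeanPayoffGame.

Theorem mainTheorem9 (R : realFieldType) (V I : finType) (tail : I -> V)
  (head : I -> {set V}) (wt : I -> V -> R)
  (head_ne : forall A : I, head A != set0)
  (tail_notin_head : forall A : I, tail A \notin head A)
  (every_node_tail : forall v : V, exists A : I, tail A = v)
  (all_win1 : forall x : GNode V I, GH_winning_start1 tail head wt x) :
  consistent tail head wt.
Proof.
have [pi [pi_player0 pi_player1]] := player1_winning_potential all_win1.
exists (fun v => pi (inl v)) => A.
have [[A' | [[A' g] g_head]] //= [A'_eq] le_g] := pi_player1 (inr A) isT.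
rewrite A'_eq in g_head le_g; exists g => //.
by have := pi_player0 (inl A) isT; rewrite /g_w /= in le_g *; lra.
Qed.
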